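(* Let $\rho:\mathbb{N}\to\mathbb{R}$ and $\beta>0$ be such that $\rho(t)=\mathcal{O}(e^{-\beta t})$, i.e. $|\rho(t)|\le c\,e^{-\beta t}$ for some $c>0$ and all $t\in\mathbb{N}$. Then for every $n\in\{1,\dots,\lfloor99\beta\rfloor\}$ there exists a constant $C(n)$ (depending on $n$, $\beta$ and $c$ but not on $m$) such that for every $m\in\mathbb{N}_+$ there is a function $\phi(t)=\sum_{k=1}^m\alpha_ke^{-\beta_kt}$ with $\beta_k>0$ for all $k\in[m]$ and $$\sum_{t=0}^\infty|\rho(t)-\phi(t)|\le\frac{C(n)}{m^n}.$$
   Context: $\mathbb{N}=\{0,1,2,\dots\}$; $[m]=\{1,\dots,m\}$. *)

From Stdlib Require Import Reals List.
From Coquelicot Require Import Coquelicot.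
Open Scope R_scope.

Definition expsum (m : nat) (alpha bk : nat -> R) (t : nat) : R :=
  fold_right Rplus 0 (map (fun k => alpha k * exp (- bk k * INR t)) (seq 1 m)).

(* An exponential a e^{-bt} with b large is nearly the spike a [t = 0], and
   replacing each alpha_k by alpha_k e^{beta_k} shifts an exponential sum by one
   step.  By induction, m exponentials reproduce rho(0), ..., rho(m-1) up to an
   arbitrarily small l^1 error, so the error is essentially the tail
   sum_{t >= m} |rho t| = O(e^{-beta m}), which is O(m^{-n}) for every n. *)

From Stdlib Require Import Reals ZArith List Lia Lra.
From Coquelicot Require Import Coquelicot.
Open Scope R_scope.

Lemma exp_mul_INR (b : R) (t : nat) : exp (b * INR t) = exp b ^ t.
Proof.
  induction t as [|t IH].
  - simpl. rewrite Rmult_0_r. apply exp_0.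
  - rewrite S_INR, Rmult_plus_distr_l, Rmult_1_r, exp_plus, IH. simpl. ring.
Qed.

Lemma exp_neg_lt_1 (b : R) : 0 < b -> 0 < exp (- b) < 1.
Proof.
  intros Hb. split; [apply exp_pos|].
  rewrite <- exp_0. apply exp_increasing. lra.
Qed.

Lemma fold_right_Rplus_init (l : list R) (x : R) :
  fold_right Rplus x l = fold_right Rplus 0 l + x.
Proof. induction l as [|y l IH]; simpl; [ring | rewrite IH; ring]. Qed.

Lemma expsum_S m alpha bk t :
  expsum (S m) alpha bk t = expsum m alpha bk t + alpha (S m) * exp (- bk (S m) * INR t).
Proof.
  unfold expsum. rewrite seq_S, map_app, fold_right_app. simpl.
  rewrite fold_right_Rplus_init. replace (1 + m)%nat with (S m) by lia. ring.
Qed.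

Lemma expsum_ext m alpha bk alpha' bk' t :
  (forall k, (1 <= k <= m)%nat -> alpha k = alpha' k /\ bk k = bk' k) ->
  expsum m alpha bk t = expsum m alpha' bk' t.
Proof.
  induction m as [|m IH]; intros H; [reflexivity|].
  rewrite !expsum_S. destruct (H (S m)) as [-> ->]; [lia|].
  rewrite IH; [reflexivity|]. intros k Hk. apply H. lia.
Qed.

Lemma expsum_snoc m alpha bk a b t :
  expsum (S m) (fun k => if (k =? S m)%nat then a else alpha k)
               (fun k => if (k =? S m)%nat then b else bk k) t
  = expsum m alpha bk t + a * exp (- b * INR t).
Proof.
  rewrite expsum_S, Nat.eqb_refl. f_equal. apply expsum_ext.
  intros k Hk. destruct (Nat.eqb_spec k (S m)); [lia | split; reflexivity].
Qed.

Lemma expsum_succ m alpha bk t :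
  expsum m (fun k => alpha k * exp (bk k)) bk (S t) = expsum m alpha bk t.
Proof.
  induction m as [|m IH]; [reflexivity|].
  rewrite !expsum_S, IH, S_INR, Rmult_assoc, <- exp_plus.
  do 3 f_equal. ring.
Qed.

Lemma ex_series_Rabs_le (a b : nat -> R) :
  (forall t, Rabs (a t) <= b t) -> ex_series b -> ex_series (fun t => Rabs (a t)).
Proof.
  intros Hab Hb. apply (ex_series_le (V := R_CompleteNormedModule)) with b; [|exact Hb].
  intros t. change (Rabs (Rabs (a t)) <= b t). rewrite Rabs_Rabsolu. apply Hab.
Qed.

Lemma ex_series_Rabs_expsum m alpha bk :
  (forall k, (1 <= k <= m)%nat -> 0 < bk k) ->
  ex_series (fun t => Rabs (expsum m alpha bk t)).
Proof.
  induction m as [|m IH]; intros Hbk.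
  - apply ex_series_Rabs_le with (fun t => 0 ^ t).
    + intros t. unfold expsum. simpl. rewrite Rabs_R0. apply pow_le. lra.
    + apply ex_series_geom. rewrite Rabs_R0. lra.
  - pose proof (exp_neg_lt_1 (bk (S m)) (Hbk (S m) ltac:(lia))) as Hq.
    apply ex_series_Rabs_le with
      (fun t => Rabs (expsum m alpha bk t) + Rabs (alpha (S m)) * exp (- bk (S m)) ^ t).
    + intros t. rewrite expsum_S, <- exp_mul_INR.
      eapply Rle_trans; [apply Rabs_triang|]. rewrite Rabs_mult, (Rabs_pos_eq (exp _)).
      * lra.
      * left. apply exp_pos.
    + apply (@ex_series_plus R_AbsRing R_NormedModule).
      * apply IH. intros k Hk. apply Hbk. lia.
      * apply (@ex_series_scal_l R_AbsRing R_NormedModule), ex_series_geom.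
        rewrite Rabs_pos_eq; lra.
Qed.

Lemma ex_series_Rabs_sub_expsum (g : nat -> R) m alpha bk :
  ex_series (fun t => Rabs (g t)) ->
  (forall k, (1 <= k <= m)%nat -> 0 < bk k) ->
  ex_series (fun t => Rabs (g t - expsum m alpha bk t)).
Proof.
  intros Hg Hbk.
  apply ex_series_Rabs_le with (fun t => Rabs (g t) + Rabs (expsum m alpha bk t)).
  - intros t. unfold Rminus. rewrite <- (Rabs_Ropp (expsum m alpha bk t)).
    apply Rabs_triang.
  - apply (@ex_series_plus R_AbsRing R_NormedModule);
      [exact Hg | apply ex_series_Rabs_expsum, Hbk].
Qed.

Lemma exists_exp_geom_mass_le (A d : R) : 0 <= A -> 0 < d ->
  exists b, 0 < b /\ A * exp (- b) / (1 - exp (- b)) <= d.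
Proof.
  intros HA Hd. set (x := d / (d + A + 1)).
  assert (Hx : 0 < x < 1).
  { unfold x. split; [apply Rdiv_lt_0_compat; lra|].
    apply (Rdiv_lt_1 d); lra. }
  exists (- ln x). rewrite Ropp_involutive, exp_ln by lra. split.
  - assert (ln x < 0) by (rewrite <- ln_1; apply ln_increasing; lra). lra.
  - replace (A * x / (1 - x)) with (d * (A / (A + 1))) by (unfold x; field; lra).
    rewrite <- (Rmult_1_r d) at 2. apply Rmult_le_compat_l; [lra|].
    apply (Rdiv_le_1 A); lra.
Qed.

(* The spike [a x^t] absorbs the residual at [t = 0]; after it, the error is
   that of the shifted sum plus the mass [|a| x / (1 - x)] of the spike. *)
Lemma Series_Rabs_sub_expsum_spike_le (g alpha bk : nat -> R) (T : nat) (a x : R) :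
  ex_series (fun t => Rabs (g t)) ->
  (forall k, (1 <= k <= T)%nat -> 0 < bk k) -> 0 < x < 1 ->
  g 0%nat = expsum T (fun k => alpha k * exp (bk k)) bk 0 + a ->
  Series (fun t => Rabs (g t - (expsum T (fun k => alpha k * exp (bk k)) bk t + a * x ^ t)))
    <= Series (fun t => Rabs (g (S t) - expsum T alpha bk t)) + Rabs a * x / (1 - x).
Proof.
  intros Hg Hbk Hx Hg0.
  assert (Hgeom : ex_series (fun t => Rabs a * x * x ^ t)).
  { apply (@ex_series_scal_l R_AbsRing R_NormedModule), ex_series_geom.
    rewrite Rabs_pos_eq; lra. }
  assert (Hshift : ex_series (fun t => Rabs (g (S t) - expsum T alpha bk t))).
  { apply ex_series_Rabs_sub_expsum; [|exact Hbk].
    exact (proj1 (ex_series_incr_1 _) Hg). }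
  rewrite Series_incr_1_aux.
  2: { rewrite Hg0. simpl. rewrite <- Rabs_R0. f_equal. ring. }
  eapply Rle_trans.
  { apply Series_le
      with (b := fun t => Rabs (g (S t) - expsum T alpha bk t) + Rabs a * x * x ^ t).
    - intros t. split; [apply Rabs_pos|]. rewrite expsum_succ.
      replace (g (S t) - (expsum T alpha bk t + a * x ^ S t))
        with ((g (S t) - expsum T alpha bk t) + - (a * x ^ S t)) by ring.
      eapply Rle_trans; [apply Rabs_triang|]. apply Rplus_le_compat_l.
      rewrite Rabs_Ropp, Rabs_mult, (Rabs_pos_eq (x ^ S t)); [simpl; lra|].
      apply pow_le. lra.
    - apply (@ex_series_plus R_AbsRing R_NormedModule); assumption. }
  rewrite Series_plus, Series_scal_l, Series_geom; try assumption.
  - right. reflexivity.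
  - rewrite Rabs_pos_eq; lra.
Qed.

Lemma expsum_fit_head (T : nat) (g : nat -> R) (d : R) :
  ex_series (fun t => Rabs (g t)) -> 0 < d ->
  exists alpha bk : nat -> R,
    (forall k, (1 <= k <= T)%nat -> 0 < bk k) /\
    Series (fun t => Rabs (g t - expsum T alpha bk t))
      <= Series (fun t => Rabs (g (t + T)%nat)) + d.
Proof.
  revert g d. induction T as [|T IH]; intros g d Hg Hd.
  - exists (fun _ => 0), (fun _ => 1). split; [intros; lra|].
    rewrite (Series_ext _ (fun t => Rabs (g (t + 0)%nat))); [lra|].
    intros t. rewrite Nat.add_0_r. unfold expsum. simpl. f_equal. ring.
  - assert (Hg' : ex_series (fun t => Rabs (g (S t)))).
    { exact (proj1 (ex_series_incr_1 _) Hg). }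
    destruct (IH (fun t => g (S t)) (d / 2) Hg' ltac:(lra)) as [al [b [Hb Hfit]]].
    set (a := g 0%nat - expsum T (fun k => al k * exp (b k)) b 0).
    destruct (exists_exp_geom_mass_le (Rabs a) (d / 2) (Rabs_pos a) ltac:(lra))
      as [bb [Hbb Hmass]].
    exists (fun k => if (k =? S T)%nat then a else al k * exp (b k)),
           (fun k => if (k =? S T)%nat then bb else b k).
    split.
    { intros k Hk. destruct (Nat.eqb_spec k (S T)); [lra | apply Hb; lia]. }
    rewrite (Series_ext _ (fun t => Rabs (g t
      - (expsum T (fun k => al k * exp (b k)) b t + a * exp (- bb) ^ t)))).
    2: { intros t. rewrite expsum_snoc, exp_mul_INR. reflexivity. }
    eapply Rle_trans.
    { apply Series_Rabs_sub_expsum_spike_le;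
        [exact Hg | exact Hb | apply exp_neg_lt_1, Hbb | unfold a; ring]. }
    rewrite (Series_ext (fun t => Rabs (g (t + S T)%nat)) (fun t => Rabs (g (S (t + T))))).
    + lra.
    + intros t. rewrite Nat.add_succ_r. reflexivity.
Qed.

Lemma ex_series_Rabs_geom_dominated (g : nat -> R) (c q : R) :
  0 <= q < 1 -> (forall t, Rabs (g t) <= c * q ^ t) -> ex_series (fun t => Rabs (g t)).
Proof.
  intros Hq Hg. apply ex_series_Rabs_le with (fun t => c * q ^ t); [exact Hg|].
  apply (@ex_series_scal_l R_AbsRing R_NormedModule), ex_series_geom.
  rewrite Rabs_pos_eq; lra.
Qed.

Lemma Series_tail_geom_dominated (g : nat -> R) (c q : R) (m : nat) :
  0 <= q < 1 -> (forall t, Rabs (g t) <= c * q ^ t) ->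
  Series (fun t => Rabs (g (t + m)%nat)) <= c * q ^ m / (1 - q).
Proof.
  intros Hq Hg. eapply Rle_trans.
  { apply Series_le with (b := fun t => c * q ^ m * q ^ t).
    - intros t. split; [apply Rabs_pos|].
      rewrite Rmult_assoc, <- pow_add, Nat.add_comm. apply Hg.
    - apply (@ex_series_scal_l R_AbsRing R_NormedModule), ex_series_geom.
      rewrite Rabs_pos_eq; lra. }
  rewrite Series_scal_l, Series_geom; [right; reflexivity|].
  rewrite Rabs_pos_eq; lra.
Qed.

Lemma expsum_approx_geom_dominated (g : nat -> R) (c q : R) (m : nat) :
  0 < q < 1 -> (forall t, Rabs (g t) <= c * q ^ t) ->
  exists alpha bk : nat -> R,
    (forall k, (1 <= k <= m)%nat -> 0 < bk k) /\
    ex_series (fun t => Rabs (g t - expsum m alpha bk t)) /\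
    Series (fun t => Rabs (g t - expsum m alpha bk t)) <= (c / (1 - q) + 1) * q ^ m.
Proof.
  intros Hq Hg.
  assert (Hsum : ex_series (fun t => Rabs (g t)))
    by (apply ex_series_Rabs_geom_dominated with c q; [lra | exact Hg]).
  destruct (expsum_fit_head m g (q ^ m) Hsum) as [alpha [bk [Hbk Hfit]]].
  { apply pow_lt. lra. }
  exists alpha, bk. split; [exact Hbk|]. split.
  - apply ex_series_Rabs_sub_expsum; assumption.
  - pose proof (Series_tail_geom_dominated g c q m ltac:(lra) Hg) as Htail.
    replace ((c / (1 - q) + 1) * q ^ m) with (c * q ^ m / (1 - q) + q ^ m)
      by (field; lra).
    lra.
Qed.

Lemma pow_INR_mul_exp_neg_le (beta : R) (n m : nat) : 0 < beta -> (1 <= n)%nat ->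
  INR m ^ n * exp (- beta * INR m) <= (INR n / beta) ^ n.
Proof.
  intros Hb Hn.
  assert (HN : 0 < INR n) by (apply lt_0_INR; lia).
  set (y := beta * INR m / INR n).
  assert (Hy : 0 <= y).
  { unfold y, Rdiv. apply Rmult_le_pos; [apply Rmult_le_pos; [lra | apply pos_INR]|].
    left. apply Rinv_0_lt_compat. exact HN. }
  (* [y <= e^y], raised to the n-th power *)
  assert (Hpow : y ^ n <= exp (beta * INR m)).
  { replace (beta * INR m) with (y * INR n) by (unfold y; field; lra).
    rewrite exp_mul_INR. apply pow_incr. pose proof (exp_ineq1_le y). lra. }
  replace (INR m ^ n) with ((INR n / beta) ^ n * y ^ n)
    by (rewrite <- Rpow_mult_distr; f_equal; unfold y; field; lra).
  rewrite Rmult_assoc. rewrite <- (Rmult_1_r ((INR n / beta) ^ n)) at 2.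
  apply Rmult_le_compat_l; [apply pow_le; left; apply Rdiv_lt_0_compat; lra|].
  replace 1 with (exp (beta * INR m) * exp (- beta * INR m)).
  - apply Rmult_le_compat_r; [left; apply exp_pos | exact Hpow].
  - rewrite <- exp_plus, <- exp_0. f_equal. ring.
Qed.

Theorem lemmaF3 (rho : nat -> R) (beta c : R) (hbeta : 0 < beta) (hc : 0 < c)
  (hrho : forall t : nat, Rabs (rho t) <= c * exp (- beta * INR t)) :
  forall n : nat, (1 <= n)%nat -> (Z.of_nat n <= Int_part (99 * beta))%Z ->
  exists C : R, forall m : nat, (1 <= m)%nat ->
    exists alpha bk : nat -> R,
      (forall k : nat, (1 <= k <= m)%nat -> 0 < bk k) /\
      ex_series (fun t : nat => Rabs (rho t - expsum m alpha bk t)) /\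
      Series (fun t : nat => Rabs (rho t - expsum m alpha bk t)) <= C / INR m ^ n.
Proof.
  intros n Hn _.
  pose proof (exp_neg_lt_1 beta hbeta) as Hq.
  set (q := exp (- beta)) in Hq.
  assert (Hdom : forall t, Rabs (rho t) <= c * q ^ t).
  { intros t. unfold q. rewrite <- exp_mul_INR. apply hrho. }
  assert (HK : 0 < c / (1 - q) + 1).
  { assert (0 < c / (1 - q)) by (apply Rdiv_lt_0_compat; lra). lra. }
  exists ((c / (1 - q) + 1) * (INR n / beta) ^ n). intros m Hm.
  destruct (expsum_approx_geom_dominated rho c q m Hq Hdom)
    as [alpha [bk [Hbk [Hex Herr]]]].
  exists alpha, bk. split; [exact Hbk|]. split; [exact Hex|].
  pose proof (pow_INR_mul_exp_neg_le beta n m hbeta Hn) as Hrate.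
  rewrite exp_mul_INR in Hrate. fold q in Hrate.
  assert (HM : 0 < INR m ^ n) by (apply pow_lt, lt_0_INR; lia).
  apply Rle_trans with (1 := Herr). unfold Rdiv. rewrite Rmult_assoc.
  apply Rmult_le_compat_l; [lra|].
  apply (Rmult_le_reg_r (INR m ^ n)); [exact HM|].
  rewrite Rmult_assoc, Rinv_l, Rmult_1_r; lra.
Qed.
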